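(* Let $D\geq 5$ and $n\geq 1$ be integers. Let $\mathcal{Z}_{(1)},\mathcal{Z}_{(2)},\mathcal{Z}_{(3)},\mathcal{Z}_{(n+2)},\mathcal{Z}_{(n+3)},\mathcal{Z}_{(n+4)}$ be scalar curvature invariants (built from the metric and the Riemann tensor) such that for each order $m\in\{1,2,3,n+2,n+3,n+4\}$ and every function $f(r)$ $$\mathcal{Z}_{(m)}|_f = r^{2-D}\frac{\mathrm{d}}{\mathrm{d}r}\Big[r^{D-1}\psi^{m-1}\big((2m-D)\psi-2mB\big)\Big]=-4m(m-1)B^2\psi^{m-2}+m\big(2A-4(D-2m)B\big)\psi^{m-1}-(D-2m)(D-2m-1)\psi^m.$$ Define $$\mathcal{Z}_{(n+5)}=-\frac{3(n+3)\mathcal{Z}_{(1)}\mathcal{Z}_{(n+4)}}{D(D-1)(n+1)}+\frac{3(n+4)\mathcal{Z}_{(2)}\mathcal{Z}_{(n+3)}}{D(D-1)n}-\frac{(n+3)(n+4)\mathcal{Z}_{(3)}\mathcal{Z}_{(n+2)}}{D(D-1)n(n+1)}.$$ Then for every $f(r)$, $\mathcal{Z}_{(n+5)}|_f$ is given by the same formula with $m=n+5$.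
   Context: Consider the metric $\mathrm{d}s^2=-f(r)\mathrm{d}t^2+\mathrm{d}r^2/f(r)+r^2\mathrm{d}\Sigma^2_{k}$ in $D$ dimensions, where $\mathrm{d}\Sigma^2_k$ is the metric of a $(D-2)$-dimensional space of constant sectional curvature $k\in\{1,0,-1\}$. For a scalar curvature invariant $\mathcal{L}$, $\mathcal{L}|_f$ denotes its evaluation on this metric, a function of $r,f,f',f''$. Set $A=f''(r)/2$, $B=-f'(r)/(2r)$, $\psi=(k-f(r))/r^2$. *)

From HB Require Import structures.
From mathcomp Require Import all_boot all_order all_algebra.
Set Implicit Arguments. Unset Strict Implicit. Unset Printing Implicit Defensive.
Import Order.TTheory GRing.Theory Num.Theory.
Local Open Scope ring_scope.

Definition Aof (R : realFieldType) (f2 : R) : R := f2 / 2.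
Definition Bof (R : realFieldType) (r f1 : R) : R := - f1 / (2 * r).
Definition psiof (R : realFieldType) (k r f0 : R) : R := (k - f0) / r ^+ 2.

(* The right-hand side
   -4m(m-1) B^2 psi^(m-2) + m(2A - 4(D-2m)B) psi^(m-1) - (D-2m)(D-2m-1) psi^m.
   For m = 1 the first term has coefficient 0 (the truncated exponent is
   then irrelevant). *)
Definition Zform (R : realFieldType) (D m : nat) (A B psi : R) : R :=
  - (4 * (m * (m - 1)))%:R * B ^+ 2 * psi ^+ (m - 2)
  + m%:R * (2 * A - 4 * (D%:R - 2 * m%:R) * B) * psi ^+ (m - 1)
  - (D%:R - 2 * m%:R) * (D%:R - 2 * m%:R - 1) * psi ^+ m.

(* Evaluation L|_f of a scalar invariant on the metric ansatz: a function of
   (r, f(r), f'(r), f''(r)). *)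
Definition evalInv (R : realFieldType) := R -> R -> R -> R -> R.

From HB Require Import structures.
From mathcomp Require Import all_boot all_order all_algebra.
From mathcomp Require Import ring zify.
Set Implicit Arguments. Unset Strict Implicit. Unset Printing Implicit Defensive.
Import Order.TTheory GRing.Theory Num.Theory.
Local Open Scope ring_scope.

(* For m >= 2 the formula factors as Z_m = psi^(m-2) Q_m, where Q_m is a
   quadratic polynomial in psi whose coefficients are polynomial in m, and
   for m = 1 one still has psi Z_1 = Q_1.  After extracting the common factor
   psi^(n+1), the claimed combination becomes a polynomial identity in
   (n, D, A, B, psi) among the Q's, valid in every commutative ring. *)

Definition Zquad (R : comPzRingType) (D m A B psi : R) : R :=
  - 4 * m * (m - 1) * B ^+ 2 + m * (2 * A - 4 * (D - 2 * m) * B) * psi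
  - (D - 2 * m) * (D - 2 * m - 1) * psi ^+ 2.

Lemma Zquad_recursion (R : comPzRingType) (D nu A B psi : R) :
  - 3 * nu * (nu + 3) * Zquad D 1 A B psi * Zquad D (nu + 4) A B psi
  + 3 * (nu + 1) * (nu + 4) * Zquad D 2 A B psi * Zquad D (nu + 3) A B psi
  - (nu + 3) * (nu + 4) * Zquad D 3 A B psi * Zquad D (nu + 2) A B psi
  = nu * (nu + 1) * D * (D - 1) * psi ^+ 2 * Zquad D (nu + 5) A B psi.
Proof. by rewrite /Zquad; ring. Qed.

Lemma ZformE (R : realFieldType) (D m : nat) (A B psi : R) : (2 <= m)%N ->
  Zform D m A B psi = psi ^+ (m - 2) * Zquad D%:R m%:R A B psi.
Proof.
move=> m_ge2; rewrite /Zform /Zquad.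
have -> : (m - 1 = m - 2 + 1)%N by lia.
rewrite -[in psi ^+ m](subnK m_ge2) !exprD !(natrM, natrD, natrB) //.
ring.
Qed.

Lemma Zquad1E (R : realFieldType) (D : nat) (A B psi : R) :
  Zquad D%:R 1 A B psi = psi * Zform D 1 A B psi.
Proof. by rewrite /Zform /Zquad subnn muln0 expr0 expr1; ring. Qed.

Theorem mainTheorem3 (R : realFieldType) (D n : nat) (k : R)
  (Z : nat -> evalInv R) :
  (5 <= D)%N -> (1 <= n)%N -> (k = 1 \/ k = 0 \/ k = -1) ->
  (forall m : nat, m \in [:: 1; 2; 3; n + 2; n + 3; n + 4]%N ->
     forall r f0 f1 f2 : R, 0 < r ->
       Z m r f0 f1 f2 = Zform D m (Aof f2) (Bof r f1) (psiof k r f0)) ->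
  forall r f0 f1 f2 : R, 0 < r ->
    let Z1 := Z 1%N r f0 f1 f2 in
    let Z2 := Z 2%N r f0 f1 f2 in
    let Z3 := Z 3%N r f0 f1 f2 in
    let Zn2 := Z (n + 2)%N r f0 f1 f2 in
    let Zn3 := Z (n + 3)%N r f0 f1 f2 in
    let Zn4 := Z (n + 4)%N r f0 f1 f2 in
    let DD := D%:R * (D%:R - 1) : R in
    - (3 * (n%:R + 3)) * Z1 * Zn4 / (DD * (n%:R + 1))
    + (3 * (n%:R + 4)) * Z2 * Zn3 / (DD * n%:R)
    - ((n%:R + 3) * (n%:R + 4)) * Z3 * Zn2 / (DD * n%:R * (n%:R + 1))
    = Zform D (n + 5) (Aof f2) (Bof r f1) (psiof k r f0).
Proof.
move=> D_ge5 n_ge1 _ HZ r f0 f1 f2 r_gt0 /=.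
rewrite !HZ ?inE ?eqxx ?orbT //.
set A := Aof f2; set B := Bof r f1; set psi := psiof k r f0.
set Z1 := Zform D 1 A B psi.
rewrite !ZformE ?ltn_addl // -!addnBA //= !natrD !exprD.
set nu : R := n%:R; set d : R := D%:R.
have nu_neq0 : nu != 0 by rewrite pnatr_eq0 -lt0n.
have nu1_neq0 : nu + 1 != 0 by rewrite natr1 pnatr_eq0.
have d_neq0 : d != 0 by rewrite pnatr_eq0; lia.
have d1_neq0 : d - 1 != 0 by rewrite subr_eq0 pnatr_eq1; lia.
transitivity (psi ^+ n * psi / (nu * (nu + 1) * d * (d - 1)) *
  (nu * (nu + 1) * d * (d - 1) * psi ^+ 2 * Zquad d (nu + 5) A B psi)).
  rewrite -Zquad_recursion Zquad1E /Z1.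
  by field; rewrite nu_neq0 nu1_neq0 d_neq0 d1_neq0.
by field; rewrite nu_neq0 nu1_neq0 d_neq0 d1_neq0.
Qed.
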